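(* Consider any run of shadow moat growing on $(G,t)$ with final growth values $(y_S)$, and any forest $F$ in $G$. Then $$\sum_{S\subseteq V:\ S\odot F} y_S\ \le\ c(F)-\frac{\mathrm{UM}(F)}{2}.$$
   Context: $G=(V,E,c)$ is an undirected graph with edge costs $c\ge0$; $\delta(S)$ is the set of edges with exactly one endpoint in $S$; $c(F)=\sum_{e\in F}c_e$. Shadow moat growing on $(G,t)$, $t:V\to\mathbb{R}_{\ge0}$: continuous process in time maintaining a forest (initially empty), its components, and $y_S\ge0$ (initially $0$); at time $\tau$ a component $C$ is active iff some $w\in C$ has $t_w>\tau$, and each active $C$ increases $y_C$ at rate $1$; an edge $e$ between different components with $\sum_{S:e\in\delta(S)}y_S=c_e$ is added and the components merge; stop when nothing is active. In every run $\sum_{S:e\in\delta(S)}y_S\le c_e$ for all edges. For sets $S,A\subseteq V$, $S\odot A$ means $S\cap A\ne\emptyset$ and $A\not\subseteq S$; for a forest $F$, $S\odot F$ means $S\odot V(K)$ for at least one connected component $K$ of $F$. For a forest $F$: $\mathrm{UC}(F)=\sum_{e\in F}\big(c_e-\sum_{S:e\in\delta(S)}y_S\big)$; $\mathrm{MC}(F)=\sum_{S:\,|\delta(S)\cap F|\ge2}|\delta(S)\cap F|\,y_S$; $\mathrm{UM}(F)=\mathrm{UC}(F)+\mathrm{MC}(F)$. *)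

From mathcomp Require Import all_boot all_order all_algebra.
Set Implicit Arguments. Unset Strict Implicit. Unset Printing Implicit Defensive.
Import Order.TTheory GRing.Theory Num.Theory.
Local Open Scope ring_scope.

Section Moats.
Variables (R : realFieldType) (V : finType).

(* A graph G = (V,E,c): E is a set of 2-element subsets of V (edges). *)

Definition adj (A : {set {set V}}) : rel V :=
  fun x y => (x != y) && ([set x; y] \in A).

Definition comp (A : {set {set V}}) (v : V) : {set V} :=
  [set u | connect (adj A) v u].

Definition delta (E : {set {set V}}) (S : {set V}) : {set {set V}} :=
  [set e in E | #|e :&: S| == 1%N].

Definition load (E : {set {set V}}) (y : {set V} -> R) (e : {set V}) : R :=
  \sum_(S : {set V} | e \in delta E S) y S.

Definition cost (c : {set V} -> R) (F : {set {set V}}) : R :=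
  \sum_(e in F) c e.

Definition is_forest (E F : {set {set V}}) : Prop :=
  F \subset E /\
  forall e x y, e \in F -> e = [set x; y] -> x != y ->
    ~~ connect (adj (F :\ e)) x y.

Definition odot (S A : {set V}) : bool :=
  (S :&: A != set0) && ~~ (A \subset S).

Definition odotF (S : {set V}) (F : {set {set V}}) : bool :=
  [exists v, odot S (comp F v)].

Definition UC E (c : {set V} -> R) (y : {set V} -> R) (F : {set {set V}}) : R :=
  \sum_(e in F) (c e - load E y e).

Definition MC E (y : {set V} -> R) (F : {set {set V}}) : R :=
  \sum_(S : {set V} | (2 <= #|delta E S :&: F|)%N) (#|delta E S :&: F|)%:R * y S.

Definition UM E c y F : R := UC E c y F + MC E y F.

Record mstate := MState { mtime : R; mforest : {set {set V}}; my : {set V} -> R }.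

Definition crossing (A : {set {set V}}) (e : {set V}) : bool :=
  [exists x in e, exists y in e, ~~ connect (adj A) x y].

Definition active_comp (t : V -> R) (A : {set {set V}}) (tau : R) (S : {set V}) : bool :=
  [exists v, S == comp A v] && [exists w in S, tau < t w].

Definition grow (t : V -> R) (A : {set {set V}}) (tau d : R) (y : {set V} -> R) :
  {set V} -> R :=
  fun S => y S + (if active_comp t A tau S then d else 0).

(* one event of the process; only allowed while some component is active *)
Inductive mstep (E : {set {set V}}) (c : {set V} -> R) (t : V -> R) :
  mstate -> mstate -> Prop :=
| StepGrow tau A y d :
    (exists v, tau < t v) ->
    0 < d ->
    (* all tight edges between different components have been added *)
    (forall e, e \in E -> crossing A e -> load E y e != c e) ->
    (* the set of active components stays constant during [tau, tau + d) *)
    (forall w, ~ (tau < t w /\ t w < tau + d)) ->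
    (* growth stops at the latest when an edge becomes tight *)
    (forall e, e \in E -> load E (grow t A tau d y) e <= c e) ->
    mstep E c t (MState tau A y) (MState (tau + d) A (grow t A tau d y))
| StepAdd tau A y e :
    (exists v, tau < t v) ->
    e \in E -> crossing A e -> load E y e = c e ->
    mstep E c t (MState tau A y) (MState tau (e |: A) y).

Inductive mreach (E : {set {set V}}) (c : {set V} -> R) (t : V -> R) :
  mstate -> Prop :=
| ReachInit : mreach E c t (MState 0 set0 (fun _ => 0))
| ReachStep s s' : mreach E c t s -> mstep E c t s s' -> mreach E c t s'.

(* y is the vector of final growth values of some (complete) run *)
Definition final_run_values (E : {set {set V}}) (c : {set V} -> R) (t : V -> R)
  (y : {set V} -> R) : Prop :=
  exists s, [/\ mreach E c t s, (forall v, t v <= mtime s) & y = my s].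

End Moats.

From mathcomp Require Import all_boot all_order all_algebra.
From mathcomp Require Import lra.
Set Implicit Arguments. Unset Strict Implicit. Unset Printing Implicit Defensive.
Import Order.TTheory GRing.Theory Num.Theory.
Local Open Scope ring_scope.

(* Every state reached by moat growing is a feasible dual: y >= 0 and no edge
   is overloaded. Writing k_S = |delta(S) :&: F|, dual feasibility gives
   c(F) = UC(F) + sum_S k_S y_S with UC(F) >= 0, hence
   c(F) - UM(F)/2 >= sum_S (k_S - [k_S >= 2] k_S / 2) y_S.
   The coefficient is >= 1 whenever k_S >= 1, and S (.) F forces k_S >= 1:
   a component of F that meets S without lying inside S contains an F-edge
   leaving S. *)

Section Moats.
Variables (R : realFieldType) (V : finType).
Implicit Types (E F A : {set {set V}}) (S : {set V}) (y : {set V} -> R).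

Lemma mreach_dual_feasible E (c : {set V} -> R) (t : V -> R) s :
  (forall e, e \in E -> 0 <= c e) -> mreach E c t s ->
  (forall S, 0 <= my s S) /\ (forall e, e \in E -> load E (my s) e <= c e).
Proof.
move=> c_ge0; elim=> [|s1 s2 _ [y_ge0 load_le] st].
  by split=> [//|e eE]; rewrite /load big1 ?c_ge0.
case: st y_ge0 load_le => [tau A y d _ d_gt0 _ _ grow_le | tau A y e _ _ _ _] //=.
move=> y_ge0 _; split=> // S; rewrite /grow.
by case: ifP => _; rewrite ?addr0 // addr_ge0 // ltW.
Qed.

Lemma adj_sym A : symmetric (adj A).
Proof. by move=> x z; rewrite /adj eq_sym setUC. Qed.

Lemma connect_adj_exit A S u w :
  connect (adj A) u w -> u \in S -> w \notin S ->
  exists x z, [/\ adj A x z, x \in S & z \notin S].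
Proof.
move=> uw uS wS.
case: (boolP [exists x, exists z, [&& adj A x z, x \in S & z \notin S]]).
  by case/existsP=> x /existsP [z /and3P [xz xS zS]]; exists x, z.
move=> /existsPn no_exit.
have exit_in a b : adj A a b -> a \in S -> b \in S.
  by move=> ab aS; move: (no_exit a) => /existsPn /(_ b); rewrite ab aS negbK.
have S_closed : closed (adj A) S.
  by move=> a b ab; apply/idP/idP; apply: exit_in; rewrite // adj_sym.
by move: (closed_connect S_closed uw); rewrite uS (negbTE wS).
Qed.

Lemma setI2_in_out S x z : x \in S -> z \notin S -> [set x; z] :&: S = [set x].
Proof.
move=> xS zS; apply/setP=> a; rewrite !inE.
case: (eqVneq a x) => [->|_]; first by rewrite xS.
by case: (eqVneq a z) => [->|_]; rewrite ?(negbTE zS) ?andbF.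
Qed.

Lemma odotF_delta_gt0 E F S :
  F \subset E -> odotF S F -> (0 < #|delta E S :&: F|)%N.
Proof.
move=> FE /existsP [v /andP [/set0Pn [u /setIP [uS uK]] /subsetPn [w wK wS]]].
rewrite inE in uK; rewrite inE in wK.
have uw : connect (adj F) u w.
  by rewrite (sym_connect_sym (@adj_sym F)) in uK; exact: connect_trans uK wK.
have [x [z [/andP [_ xzF] xS zS]]] := connect_adj_exit uw uS wS.
apply/card_gt0P; exists [set x; z].
by rewrite !inE xzF (subsetP FE _ xzF) setI2_in_out ?cards1.
Qed.

Lemma sum_load_cut E F y :
  \sum_(e in F) load E y e = \sum_S #|delta E S :&: F|%:R * y S.
Proof.
rewrite /load (exchange_big_dep xpredT) //=; apply: eq_bigr => S _.
rewrite (eq_bigl (fun e => e \in delta E S :&: F)); last by move=> e; rewrite in_setI andbC.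
by rewrite sumr_const mulr_natl.
Qed.

Lemma cost_UC_load E (c : {set V} -> R) y F :
  cost c F = UC E c y F + \sum_(e in F) load E y e.
Proof. by rewrite /UC sumrB subrK. Qed.

Lemma UC_ge0 E (c : {set V} -> R) y F :
  F \subset E -> (forall e, e \in E -> load E y e <= c e) -> 0 <= UC E c y F.
Proof.
move=> FE load_le; apply: sumr_ge0 => e eF.
by rewrite subr_ge0 load_le // (subsetP FE).
Qed.

Lemma odot_coef_le (b : bool) (k : nat) (yS : R) :
  0 <= yS -> (b -> (0 < k)%N) ->
  (if b then yS else 0) <= k%:R * yS - (if (2 <= k)%N then k%:R * yS else 0) / 2.
Proof.
move=> yS_ge0; case: k => [|[|k]] /=.
- by case: b => [/(_ isT)|_]; rewrite ?mul0r ?subr0.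
- by rewrite mul1r mul0r subr0; case: b.
- have two_le : (2 : R) <= k.+2%:R by rewrite ler_nat.
  by case: b => _ /=; nra.
Qed.

End Moats.

Theorem mainTheorem10 (R : realFieldType) (V : finType)
  (E : {set {set V}}) (c : {set V} -> R) (t : V -> R)
  (hE : forall e, e \in E -> #|e| = 2%N)
  (hc : forall e, e \in E -> 0 <= c e)
  (ht : forall v, 0 <= t v)
  (y : {set V} -> R) (hy : final_run_values E c t y)
  (F : {set {set V}}) (hF : is_forest E F) :
  \sum_(S : {set V} | odotF S F) y S <= cost c F - UM E c y F / 2.
Proof.
have [s [s_reach _ ->]] := hy; have [FE _] := hF.
have [y_ge0 load_le] := mreach_dual_feasible hc s_reach.
have UC0 := UC_ge0 FE load_le.
have coef_sum : \sum_(S | odotF S F) my s S <= \sum_S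
    (#|delta E S :&: F|%:R * my s S -
     (if (2 <= #|delta E S :&: F|)%N then #|delta E S :&: F|%:R * my s S else 0) / 2).
  rewrite big_mkcond /=; apply: ler_sum => S _.
  exact/odot_coef_le/odotF_delta_gt0.
move: coef_sum; rewrite sumrB -mulr_suml -sum_load_cut -big_mkcond /=.
rewrite /UM (cost_UC_load E c (my s)) -/(MC E (my s) F); lra.
Qed.
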